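(* Let $n\in\mathbb{N}$ and let $T\subseteq\mathbb{F}_2^n$ (with $\mathbb{F}_2=\{0,1\}$). Let $C$ be the $n$-qubit projector $C=\sum_{z\in T}|z\rangle\langle z|$ onto the span of the computational basis states indexed by $T$, let $X=\sum_{j=1}^n\sigma^x_j$ where $\sigma^x_j$ is the Pauli-$X$ operator on qubit $j$, and for real angles $\beta,\gamma$ define $$|\beta,\gamma\rangle_1=e^{-i\beta X}e^{-i\gamma C}|+\rangle^{\otimes n},\qquad F_1(\beta,\gamma)=\langle\beta,\gamma|_1\,C\,|\beta,\gamma\rangle_1 .$$ Then $$F_1(\beta,\gamma)=\frac{1}{2^n}\sum_{k\in T}|c_k(\beta,\gamma)|^2,$$ where $$c_k(\beta,\gamma)=\sum_{d=0}^n\left(\#_d(k)\,(e^{-i\gamma}-1)+\binom{n}{d}\right)f_n(\beta,d),$$ with $\#_d(k)=|\{z\in T: d_H(z,k)=d\}|$, $f_n(\beta,d)=(\cos\beta)^{n-d}(-i\sin\beta)^d$, and $d_H$ the Hamming distance between bit strings.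
   Context: $T$ is the target space (set of bit strings encoding solutions of a decision problem instance); $|z\rangle$ for $z\in\mathbb{F}_2^n$ is the corresponding computational basis state, and $|+\rangle=(|0\rangle+|1\rangle)/\sqrt2$. *)

From mathcomp Require Import all_boot all_order all_algebra.
From mathcomp Require Import reals topology normedtype sequences trigo.
From mathcomp Require Import complex.
Import numFieldNormedType.Exports.
Set Implicit Arguments. Unset Strict Implicit. Unset Printing Implicit Defensive.
Import Order.TTheory GRing.Theory Num.Theory.
Local Open Scope ring_scope.
Local Open Scope complex_scope.

(* Bit strings z in F_2^n, i.e. functions 'I_n -> bool (qubit j <-> index j). *)
Definition bits (n : nat) := {ffun 'I_n -> bool}.

Definition hamming (n : nat) (z k : bits n) : nat := #|[set j | z j != k j]|.

Definition flip (n : nat) (j : 'I_n) (z : bits n) : bits n :=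
  [ffun i => if i == j then ~~ z i else z i].

Section Ops.
Variables (R : realType) (n : nat).
Local Notation C := (R[i]).

(* n-qubit states: vectors indexed by the computational basis (bit strings);
   operators: matrices indexed by bit strings, A x y = <x|A|y>. *)
Definition state := bits n -> C.
Definition op := bits n -> bits n -> C.

Definition idop : op := fun x y => if x == y then 1 else 0.
Definition mulop (A B : op) : op := fun x y => \sum_(z : bits n) A x z * B z y.
Definition scaleop (a : C) (A : op) : op := fun x y => a * A x y.
Definition powop (A : op) (k : nat) : op := iter k (mulop A) idop.
Definition applyop (A : op) (v : state) : state :=
  fun x => \sum_(y : bits n) A x y * v y.

Definition expop (A : op) : op := fun x y =>
  (limn (fun N => \sum_(k < N) ((powop A k x y / (k`!)%:R) : C^o)) : C).

Definition sigmax (j : 'I_n) : op := fun x y => if x == flip j y then 1 else 0.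

Definition Xop : op := fun x y => \sum_(j < n) sigmax j x y.

Definition projT (T : {set bits n}) : op :=
  fun x y => if (x == y) && (x \in T) then 1 else 0.

Definition plus_state : state := fun _ => ((Num.sqrt (2%:R ^+ n : R))^-1)%:C.

Definition ket1 (T : {set bits n}) (beta gamma : R) : state :=
  applyop (expop (scaleop (- 'i * beta%:C) Xop))
    (applyop (expop (scaleop (- 'i * gamma%:C) (projT T))) plus_state).

Definition F1 (T : {set bits n}) (beta gamma : R) : C :=
  \sum_(x : bits n) \sum_(y : bits n)
     (ket1 T beta gamma x)^* * projT T x y * ket1 T beta gamma y.

Definition expi (t : R) : C := (cos t)%:C + 'i * (sin t)%:C.

Definition ndist (T : {set bits n}) (k : bits n) (d : nat) : nat :=
  #|[set z in T | hamming z k == d]|.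

Definition fn (beta : R) (d : nat) : C :=
  ((cos beta)%:C) ^+ (n - d) * (- 'i * (sin beta)%:C) ^+ d.

Definition ck (T : {set bits n}) (beta gamma : R) (k : bits n) : C :=
  \sum_(d < n.+1)
    ((ndist T k d)%:R * (expi (- gamma) - 1) + ('C(n, d))%:R) * fn beta d.

End Ops.

From mathcomp Require Import all_boot all_order all_algebra.
From mathcomp Require Import boolp reals topology normedtype sequences trigo.
From mathcomp Require Import complex.
From mathcomp Require Import ring.
Import numFieldNormedType.Exports.
Set Implicit Arguments. Unset Strict Implicit. Unset Printing Implicit Defensive.
Import Order.TTheory GRing.Theory Num.Theory.
Local Open Scope ring_scope.
Local Open Scope complex_scope.
Local Open Scope classical_set_scope.

(* Both exponentials are computed from the entrywise power series through a
   spectral decomposition A^k = sum_s lam_s^k P_s, which turns the series into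
   sum_s e^(lam_s) P_s.  For the phase separator the projections are C and 1 - C,
   so e^{-i gamma C} multiplies |z> by e^{-i gamma} exactly when z is in T.  For
   the mixer they are the Hadamard-basis projections, and the resulting sum
   factorises over the qubits into the 2x2 rotations e^{-i beta sigma^x}, with
   diagonal entry cos beta and off-diagonal entry -i sin beta; hence
   <x|e^{-i beta X}|y> = f_n(beta, d_H(x, y)).  Summing over y, the binomial
   theorem and a count by Hamming distance give <k|beta,gamma>_1 = 2^{-n/2} c_k,
   and F_1 = sum_{k in T} |<k|beta,gamma>_1|^2. *)

Lemma normc_real (F : rcfType) (a : F) : `|a%:C| = `|a|%:C :> F[i].
Proof. by rewrite normc_def /= expr0n /= addr0 sqrtr_sqr. Qed.

Section ComplexExponential.
Variable R : realType.
Local Notation C := (R[i]).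

Lemma cvg_real_complex (u : nat -> R) (a : R) : u @ \oo --> a ->
  (fun N => ((u N)%:C : C^o)) @ \oo --> (a%:C : C^o).
Proof.
move=> /cvgrPdist_lt u_a; apply/cvgrPdist_lt => e e_gt0.
move: e_gt0; rewrite ltcE /= => /andP[/eqP Im_e Re_e_gt0].
have -> : e = (complex.Re e)%:C by rewrite [LHS]complexE Im_e mulr0 addr0.
near=> N; rewrite -rmorphB normc_real ltcR.
by near: N; exact: u_a.
Unshelve. all: by end_near. Qed.

Lemma expi0 : expi (0 : R) = 1.
Proof. by rewrite /expi cos0 sin0 mulr0 addr0. Qed.

Lemma expiD (a b : R) : expi (a + b) = expi a * expi b.
Proof.
have expiE t : expi t = (cos t) +i* (sin t) by rewrite /expi; simpc.
by rewrite !expiE cosD sinD; simpc; rewrite [sin a * _ + _]addrC.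
Qed.

Lemma expi_sum (I : finType) (F : I -> R) :
  expi (\sum_(i : I) F i) = \prod_(i : I) expi (F i).
Proof. exact: (big_morph _ expiD expi0). Qed.

Lemma expNi_coeffE (t : R) (k : nat) :
  (- 'i * t%:C) ^+ k / k`!%:R = (cos_coeff t k)%:C - 'i * (sin_coeff t k)%:C :> C.
Proof.
have powNiE e : (- 'i : C) ^+ e = (-1) ^+ e./2 * (- 'i) ^+ odd e.
  by rewrite -{1}(odd_double_half e) exprD -mul2n exprM sqrrN sqr_i mulrC.
rewrite /cos_coeff /sin_coeff /= exprMn powNiE !rmorphM /= fmorphV !rmorphXn.
rewrite !rmorphN1 !rmorph_nat.
have kE := odd_double_half k; case: (odd k) kE => /= kE.
  by rewrite -[in k.-1]kE add1n /= doubleK rmorph0 rmorph1; ring.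
by rewrite rmorph0 rmorph1; ring.
Qed.

Lemma cvg_expNi (t : R) :
  (fun N => \sum_(k < N) ((- 'i * t%:C) ^+ k / k`!%:R : C^o)) @ \oo -->
  (expi (- t) : C^o).
Proof.
have -> : (fun N => \sum_(k < N) ((- 'i * t%:C) ^+ k / k`!%:R : C^o)) =
    (fun N => ((series (cos_coeff t) N)%:C : C^o) - 'i * (series (sin_coeff t) N)%:C).
  apply/funext => N; rewrite /series /= !big_mkord.
  under eq_bigr do rewrite expNi_coeffE.
  by rewrite sumrB -mulr_sumr !rmorph_sum.
rewrite /expi cosN sinN rmorphN mulrN.
have cvg_cos : series (cos_coeff t) @ \oo --> cos t.
  by rewrite cos.unlock; exact: is_cvg_series_cos_coeff.
have cvg_sin : series (sin_coeff t) @ \oo --> sin t.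
  by rewrite sin.unlock; exact: is_cvg_series_sin_coeff.
have cvg_isin : (fun N => ('i * (series (sin_coeff t) N)%:C : C^o)) @ \oo -->
    ('i * (sin t)%:C : C^o).
  by apply: cvgM; [exact: cvg_cst | exact: cvg_real_complex].
exact: cvgB (cvg_real_complex cvg_cos) cvg_isin.
Qed.

End ComplexExponential.

Section SpectralExponential.
Variables (R : realType) (n : nat).
Local Notation C := (R[i]).

Lemma expop_spectral (A : op R n) (S : finType) (lam : S -> C) (P : S -> op R n)
    (e : S -> C) :
  (forall k x y, powop A k x y = \sum_(s : S) lam s ^+ k * P s x y) ->
  (forall s, (fun N => \sum_(k < N) (lam s ^+ k / k`!%:R : C^o)) @ \oo --> (e s : C^o)) ->
  forall x y, expop A x y = \sum_(s : S) e s * P s x y.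
Proof.
move=> powAE cvg_e x y; rewrite /expop.
have -> : (fun N => \sum_(k < N) (powop A k x y / k`!%:R : C^o)) =
    (fun N => \sum_(s : S) (\sum_(k < N) (lam s ^+ k / k`!%:R : C^o)) * P s x y).
  apply/funext => N; under eq_bigr do rewrite powAE mulr_suml.
  rewrite exchange_big /=; apply: eq_bigr => s _; rewrite mulr_suml.
  by apply: eq_bigr => k _; rewrite mulrAC.
have cvg_sum : (fun N => \sum_(s : S) (\sum_(k < N) (lam s ^+ k / k`!%:R : C^o)) * P s x y)
    @ \oo --> (\sum_(s : S) e s * P s x y : C^o).
  apply: cvg_big => [|s _]; first exact: add_continuous.
  by apply: cvgM; [exact: cvg_e | exact: cvg_cst].
exact: cvg_lim _ cvg_sum.
Qed.

End SpectralExponential.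

Section PhaseSeparator.
Variables (R : realType) (n : nat) (T : {set bits n}).
Local Notation C := (R[i]).

Lemma mulop_scale_projT (c : C) (B : op R n) x y :
  mulop (scaleop c (projT R T)) B x y = if x \in T then c * B x y else 0.
Proof.
rewrite /mulop /scaleop /projT (bigD1 x) //= eqxx big1 ?addr0.
  by case: (x \in T); rewrite ?mulr1 ?mulr0 ?mul0r.
by move=> z /negbTE; rewrite eq_sym => ->; rewrite mulr0 mul0r.
Qed.

Lemma powop_scale_projT (c : C) k x y :
  powop (scaleop c (projT R T)) k x y =
  \sum_(b : bool) (if b then c else 0) ^+ k *
    (if b then projT R T x y else idop R x y - projT R T x y).
Proof.
rewrite big_bool /=; elim: k x y => [|k IHk] x y.
  by rewrite !expr0 !mul1r addrC subrK.
rewrite /powop /= -/(powop _ k) mulop_scale_projT IHk [0 ^+ k.+1]expr0n /= mul0r addr0.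
rewrite /projT /idop; case: (x \in T); rewrite ?andbT ?andbF.
  by rewrite subrr mulr0 addr0 exprS mulrA.
by rewrite mulr0.
Qed.

Lemma expop_scale_projT (gamma : R) x y :
  expop (scaleop (- 'i * gamma%:C) (projT R T)) x y =
  if x == y then (if x \in T then expi (- gamma) else 1) else 0.
Proof.
rewrite (@expop_spectral _ _ _ _ (fun b : bool => - 'i * (if b then gamma else 0)%:C)
   (fun b x y => if b then projT R T x y else idop R x y - projT R T x y)
   (fun b : bool => expi (- if b then gamma else 0))); last 2 first.
- move=> k x' y'; rewrite powop_scale_projT; apply: eq_bigr => -[] _ //.
  by rewrite rmorph0 mulr0.
- by move=> b; exact: cvg_expNi.
rewrite big_bool /= oppr0 expi0 mul1r /projT /idop.
by case: (x == y); case: (x \in T); rewrite /= ?mulr1 ?mulr0 ?subr0 ?subrr ?addr0 ?add0r.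
Qed.

Lemma applyop_expop_projT (gamma : R) (v : state R n) y :
  applyop (expop (scaleop (- 'i * gamma%:C) (projT R T))) v y =
  (if y \in T then expi (- gamma) else 1) * v y.
Proof.
rewrite /applyop (bigD1 y) //= expop_scale_projT eqxx big1 ?addr0 //.
by move=> z /negbTE zy; rewrite expop_scale_projT eq_sym zy mul0r.
Qed.

End PhaseSeparator.

Section Mixer.
Variables (R : realType) (n : nat).
Local Notation C := (R[i]).

(* <x|s~><s~|y> for the Hadamard basis vector |s~> = H^{(x)n}|s>; it is the
   eigenvector of X for the eigenvalue sum_j (-1)^{s_j}. *)
Definition hadamard_proj (s x y : bits n) : C :=
  \prod_(j < n) (2%:R^-1 * (-1) ^+ (s j && (x j != y j))).

Definition x_eigenvalue (s : bits n) : R := \sum_(j < n) (-1) ^+ s j.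

Lemma flipK (j : 'I_n) : involutive (flip j).
Proof.
by move=> z; apply/ffunP => i; rewrite !ffunE; case: eqP => // _; rewrite negbK.
Qed.

Lemma idop_hadamard x y : idop R x y = \sum_(s : bits n) hadamard_proj s x y.
Proof.
rewrite /hadamard_proj.
rewrite -(bigA_distr_bigA (fun j b => 2%:R^-1 * (-1) ^+ (b && (x j != y j)))) /=.
have half_sum (a c : bool) :
    \sum_(b : bool) (2%:R^-1 * (-1) ^+ (b && (a != c)) : C) = (a == c)%:R.
  have halfD : (2%:R^-1 : C) + 2%:R^-1 = 1.
    by rewrite -mulr2n -(mulr_natl (2%:R^-1 : C) 2) divff // pnatr_eq0.
  by rewrite big_bool; case: a; case: c; rewrite /= ?mulr1 ?mulrN1 ?halfD ?addNr.
under eq_bigr do rewrite half_sum.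
rewrite /idop; have [->|xy] := eqVneq x y.
  by rewrite big1 // => j _; rewrite eqxx.
have [j xj] : exists j, x j != y j.
  apply/existsP; apply: contraNT xy => /existsPn eq_xy.
  by apply/eqP/ffunP => j; apply/eqP/negPn.
by rewrite (bigD1 j) //= (negbTE xj) mul0r.
Qed.

Lemma hadamard_proj_flip s j x y :
  hadamard_proj s (flip j x) y = (-1) ^+ s j * hadamard_proj s x y.
Proof.
rewrite /hadamard_proj (bigD1 j) // [in RHS](bigD1 j) //= ffunE eqxx.
rewrite mulrA; congr (_ * _); last first.
  by apply: eq_bigr => i ij; rewrite ffunE (negbTE ij).
by case: (s j); case: (x j); case: (y j); rewrite /= ?expr0 ?expr1; ring.
Qed.

Lemma mulop_scale_X (c : C) (B : op R n) x y :
  mulop (scaleop c (@Xop R n)) B x y = c * \sum_(j < n) B (flip j x) y.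
Proof.
rewrite /mulop /scaleop /Xop mulr_sumr.
under eq_bigr do rewrite mulr_sumr mulr_suml.
rewrite exchange_big; apply: eq_bigr => j _.
rewrite (bigD1 (flip j x)) //= /sigmax flipK eqxx mulr1 big1 ?addr0 //.
move=> z z_flip; case: eqP => [x_flip|_]; last by rewrite mulr0 mul0r.
by move: z_flip; rewrite x_flip flipK eqxx.
Qed.

Lemma powop_scale_X (c : C) k x y :
  powop (scaleop c (@Xop R n)) k x y =
  \sum_(s : bits n) (c * (x_eigenvalue s)%:C) ^+ k * hadamard_proj s x y.
Proof.
elim: k x y => [|k IHk] x y.
  by rewrite /= idop_hadamard; apply: eq_bigr => s _; rewrite expr0 mul1r.
rewrite /powop /= -/(powop _ k) mulop_scale_X.
under eq_bigr do rewrite IHk.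
rewrite exchange_big mulr_sumr; apply: eq_bigr => s _ /=.
have eigE : \sum_(j < n) (-1) ^+ s j = (x_eigenvalue s)%:C :> C.
  by rewrite rmorph_sum; apply: eq_bigr => j _; rewrite rmorphXn rmorphN1.
under eq_bigr do rewrite hadamard_proj_flip mulrCA.
by rewrite -mulr_suml eigE exprSr; ring.
Qed.

Lemma expop_X (beta : R) x y :
  expop (scaleop (- 'i * beta%:C) (@Xop R n)) x y =
  \sum_(s : bits n) expi (- (beta * x_eigenvalue s)) * hadamard_proj s x y.
Proof.
apply: expop_spectral => [k x' y'|s]; last exact: cvg_expNi.
by rewrite powop_scale_X; apply: eq_bigr => s _; rewrite rmorphM mulrA.
Qed.

Definition rotX (beta : R) (a c : bool) : C :=
  if a == c then (cos beta)%:C else - 'i * (sin beta)%:C.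

Lemma rotXE (beta : R) (a c : bool) :
  \sum_(b : bool) expi (- (beta * (-1) ^+ b)) * (2%:R^-1 * (-1) ^+ (b && (a != c))) =
  rotX beta a c.
Proof.
have halfD (u : C) : u * 2%:R^-1 + u * 2%:R^-1 = u.
  by rewrite -mulrDr -mulr2n -(mulr_natl (2%:R^-1 : C) 2) divff ?mulr1 // pnatr_eq0.
rewrite big_bool /rotX /expi /= expr1 expr0 mulrN1 mulr1 opprK cosN sinN rmorphN.
by case: a; case: c; rewrite /= ?expr0 ?expr1 -[RHS]halfD; ring.
Qed.

Lemma expop_X_prod (beta : R) (x y : bits n) :
  expop (scaleop (- 'i * beta%:C) (@Xop R n)) x y = \prod_(j < n) rotX beta (x j) (y j).
Proof.
rewrite expop_X.
under eq_bigr do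
  rewrite /x_eigenvalue mulr_sumr -sumrN expi_sum /hadamard_proj -big_split /=.
rewrite -(bigA_distr_bigA (fun j (b : bool) =>
  expi (- (beta * (-1) ^+ b)) * (2%:R^-1 * (-1) ^+ (b && (x j != y j))))) /=.
by apply: eq_bigr => j _; rewrite rotXE.
Qed.

Lemma prod_rotX (beta : R) (x y : bits n) :
  \prod_(j < n) rotX beta (x j) (y j) = fn n beta (hamming x y).
Proof.
rewrite (bigID (fun j => x j == y j)) /=.
rewrite (eq_bigr (fun=> (cos beta)%:C)) => [|j]; last by rewrite /rotX => ->.
rewrite [X in _ * X](eq_bigr (fun=> - 'i * (sin beta)%:C)) => [|j]; last first.
  by rewrite /rotX => /negbTE ->.
have hammingE : #|[pred j | x j != y j]| = hamming x y.
  by rewrite /hamming cardsE.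
have := cardC [pred j | x j != y j]; rewrite card_ord => cardE.
rewrite !prodr_const /fn -hammingE; congr (_ ^+ _ * _ ^+ _).
by rewrite -[X in (X - _)%N]cardE addKn; apply: eq_card => j; rewrite !inE negbK.
Qed.

End Mixer.

Section Amplitudes.
Variables (R : realType) (n : nat) (T : {set bits n}).

Lemma hamming_sym (x y : bits n) : hamming x y = hamming y x.
Proof. by apply: eq_card => j; rewrite !inE eq_sym. Qed.

Lemma ltn_hamming (x y : bits n) : (hamming x y < n.+1)%N.
Proof. by rewrite ltnS -[X in (_ <= X)%N](card_ord n) max_card. Qed.

Lemma sum_fn_hamming (beta : R) (x : bits n) :
  \sum_(y : bits n) fn n beta (hamming x y) = \sum_(d < n.+1) 'C(n, d)%:R * fn n beta d.
Proof.
under eq_bigr do rewrite -prod_rotX.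
rewrite -(bigA_distr_bigA (fun j b => rotX beta (x j) b)) /=.
have sum_rotX a : \sum_(b : bool) rotX beta a b = (cos beta)%:C + - 'i * (sin beta)%:C.
  by rewrite big_bool /rotX; case: a; rewrite //= addrC.
under eq_bigr do rewrite sum_rotX.
rewrite prodr_const card_ord exprDn.
by apply: eq_bigr => d _; rewrite mulr_natl.
Qed.

Lemma sum_fn_hamming_in (beta : R) (x : bits n) :
  \sum_(y in T) fn n beta (hamming x y) = \sum_(d < n.+1) (ndist T x d)%:R * fn n beta d.
Proof.
rewrite (partition_big (fun y => Ordinal (ltn_hamming x y)) predT) //=.
apply: eq_bigr => d _.
rewrite (eq_bigl (mem [set z in T | hamming z x == d])) => [|y]; last first.
  by rewrite !inE -val_eqE /= hamming_sym.
rewrite (eq_bigr (fun=> fn n beta d)) => [|y]; last first.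
  by rewrite !inE hamming_sym => /andP[_ /eqP ->].
by rewrite sumr_const mulr_natl.
Qed.

Lemma ket1E (beta gamma : R) (x : bits n) :
  ket1 T beta gamma x = plus_state R x * ck T beta gamma x.
Proof.
rewrite /ket1 {1}/applyop.
under eq_bigr do rewrite expop_X_prod prod_rotX applyop_expop_projT.
rewrite /plus_state; set p := ((Num.sqrt _)^-1)%:C.
transitivity (p * (\sum_(y : bits n) fn n beta (hamming x y) +
                   \sum_(y in T) fn n beta (hamming x y) * (expi (- gamma) - 1))).
  rewrite [\sum_(y in T) _]big_mkcond -big_split mulr_sumr.
  by apply: eq_bigr => y _; case: (y \in T); rewrite /=; ring.
rewrite -mulr_suml sum_fn_hamming_in mulr_suml sum_fn_hamming -big_split /ck /=.
by congr (_ * _); apply: eq_bigr => d _; ring.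
Qed.

Lemma plus_state_sqr_norm (x : bits n) :
  conjc (plus_state R x) * plus_state R x = (2%:R ^+ n)^-1.
Proof.
rewrite /plus_state conjc_real -rmorphM -expr2 exprVn sqr_sqrtr ?exprn_ge0 ?ler0n //.
by rewrite fmorphV rmorphXn rmorph_nat.
Qed.

Lemma expectation_projT (v : state R n) :
  \sum_(x : bits n) \sum_(y : bits n) conjc (v x) * projT R T x y * v y =
  \sum_(x in T) conjc (v x) * v x.
Proof.
rewrite [RHS]big_mkcond; apply: eq_bigr => x _.
rewrite (bigD1 x) //= big1 => [|y /negbTE yx]; last first.
  by rewrite /projT eq_sym yx mulr0 mul0r.
by rewrite /projT eqxx addr0; case: (x \in T); rewrite ?mulr1 ?mulr0 ?mul0r.
Qed.

End Amplitudes.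

Theorem lemma2 (R : realType) (n : nat) (T : {set bits n}) (beta gamma : R) :
  F1 T beta gamma =
  ((2%:R ^+ n)^-1 : R[i]) * \sum_(k in T) `|ck T beta gamma k| ^+ 2.
Proof.
rewrite /F1 expectation_projT mulr_sumr; apply: eq_bigr => x _.
by rewrite ket1E rmorphM mulrACA plus_state_sqr_norm sqr_normc [conjc _ * _]mulrC.
Qed.
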